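(* Let $N\ge 2$, $\lambda\ne 0$, and for $x,p\in\mathbb{C}^N$ set $$L_k(x,p;\lambda)=I+\lambda^{-1}\begin{pmatrix}p_kx_k & -p_kx_k^2\\ p_k & -p_kx_k\end{pmatrix},\qquad T_N(x,p;\lambda)=L_N(x,p;\lambda)\cdots L_1(x,p;\lambda).$$ (a) Periodic case: if $\widetilde{x}\in\mathbb{C}^N$ satisfies $p_k=\frac{\lambda}{\widetilde{x}_k-x_k}+\frac{\lambda}{x_k-\widetilde{x}_{k-1}}$ for $k=1,\dots,N$ with $\widetilde x_0=\widetilde x_N$, $x_{N+1}=x_1$, then $$\frac{\prod_{k=1}^N(\widetilde{x}_k-x_{k+1})}{\prod_{k=1}^N(\widetilde{x}_k-x_k)}$$ is an eigenvalue of $T_N(x,p;\lambda)$. (b) Open-end case: if $\widetilde{x}\in\mathbb{C}^N$ satisfies $p_1=\frac{\lambda}{\widetilde{x}_1-x_1}$ and $p_k=\frac{\lambda}{\widetilde{x}_k-x_k}+\frac{\lambda}{x_k-\widetilde{x}_{k-1}}$ for $k=2,\dots,N$, then the $(2,1)$-entry of $T_N(x,p;\lambda)$ equals $$\frac{\prod_{k=1}^{N-1}(\widetilde{x}_k-x_{k+1})}{\prod_{k=1}^N(\widetilde{x}_k-x_k)}.$$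
   Context: $I$ is the $2\times2$ identity matrix. The relation between $(x,p)$ and $\widetilde x$ is the first half of the Bäcklund transformation $F_\lambda$ of the symmetric rational additive Toda-type system $\ddot x_k=-\dot x_k^2\big(\frac{1}{x_{k+1}-x_k}-\frac{1}{x_k-x_{k-1}}\big)$. *)

From HB Require Import structures.
From mathcomp Require Import all_boot all_order all_algebra.
From mathcomp Require Import reals.
From mathcomp.real_closed Require Import complex.
Set Implicit Arguments. Unset Strict Implicit. Unset Printing Implicit Defensive.
Import Order.TTheory GRing.Theory Num.Theory.
Local Open Scope ring_scope.

Definition mx2 {F : nzRingType} (a b c d : F) : 'M[F]_2 :=
  \matrix_(i < 2, j < 2)
    if i == 0 :> nat then (if j == 0 :> nat then a else b)
    else (if j == 0 :> nat then c else d).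

(* row/column index 1 and 2 of a 2x2 matrix (0-based ordinals 0 and 1) *)
Definition idx1 : 'I_2 := @Ordinal 2 0 isT.
Definition idx2 : 'I_2 := @Ordinal 2 1 isT.

(* Sequences x, p : C^N are modelled as functions nat -> C, read at 1..N. *)
Definition Lmat {F : fieldType} (x p : nat -> F) (lam : F) (k : nat) : 'M[F]_2 :=
  1%:M + lam^-1 *: mx2 (p k * x k) (- (p k * x k ^+ 2)) (p k) (- (p k * x k)).

Fixpoint Tmat {F : fieldType} (x p : nat -> F) (lam : F) (n : nat) : 'M[F]_2 :=
  match n with
  | 0 => 1%:M
  | m.+1 => Lmat x p lam m.+1 *m Tmat x p lam m
  end.

From HB Require Import structures.
From mathcomp Require Import all_boot all_order all_algebra.
From mathcomp Require Import reals.
From mathcomp.real_closed Require Import complex.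
From mathcomp Require Import ring.
Import Order.TTheory GRing.Theory Num.Theory.
Local Open Scope ring_scope.

(* The relation defining [p_k] says exactly that [L_k] maps the column
   (xt_{k-1}, 1) to (xt_{k-1} - x_k)/(xt_k - x_k) times (xt_k, 1).  Telescoping,
   [T_N] maps (xt_0, 1) to the product of these factors times (xt_N, 1).  In the
   periodic case xt_0 = xt_N, so (xt_N, 1) is an eigenvector; in the open-end
   case one starts instead from (1, 0), which [L_1] already sends to
   (xt_1, 1)/(xt_1 - x_1), and the (2,1)-entry is the second coordinate of the
   image. *)

Section LaxMatrixTransfer.

Variable F : fieldType.
Implicit Types (x p : nat -> F) (lam a b : F).

Definition col2 a b : 'cV[F]_2 := \col_(i < 2) (if i == 0 :> nat then a else b).

Lemma col2_neq0 a : col2 a 1 != 0.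
Proof. by apply/eqP => /matrixP /(_ idx2 0); rewrite !mxE; apply/eqP/oner_neq0. Qed.

Lemma Lmat_col2 x p lam k a b :
  Lmat x p lam k *m col2 a b =
  col2 ((1 + lam^-1 * (p k * x k)) * a - lam^-1 * (p k * x k ^+ 2) * b)
       (lam^-1 * p k * a + (1 - lam^-1 * (p k * x k)) * b).
Proof.
apply/matrixP => i j; rewrite !mxE big_ord_recl big_ord1 !mxE /=.
by case: i => [[|[|i]] Hi] //=; rewrite ?mxE /=; ring.
Qed.

Lemma Lmat_shift x p lam k a b :
  lam != 0 -> b != x k -> x k != a ->
  p k = lam / (b - x k) + lam / (x k - a) ->
  (b - x k) *: (Lmat x p lam k *m col2 a 1) = (a - x k) *: col2 b 1.
Proof.
move=> lam0 bx xa pk; rewrite Lmat_col2 pk.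
by apply/matrixP => i j; rewrite !mxE; case: i => [[|[|i]] Hi] //=; field;
  rewrite ?subr_eq0 ?lam0 ?bx ?xa.
Qed.

(* (1, 0) plays the role of (xt_0, 1) with xt_0 at infinity. *)
Lemma Lmat_shift_inf x p lam k b :
  lam != 0 -> b != x k -> p k = lam / (b - x k) ->
  (b - x k) *: (Lmat x p lam k *m col2 1 0) = col2 b 1.
Proof.
move=> lam0 bx pk; rewrite Lmat_col2 pk.
by apply/matrixP => i j; rewrite !mxE; case: i => [[|[|i]] Hi] //=; field;
  rewrite ?subr_eq0 ?lam0 ?bx.
Qed.

Lemma Tmat_telescope x p lam (v : nat -> 'cV[F]_2) (num den : nat -> F) n :
  (forall k, (1 <= k <= n)%N ->
     den k *: (Lmat x p lam k *m v k.-1) = num k *: v k) ->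
  (\prod_(1 <= k < n.+1) den k) *: (Tmat x p lam n *m v 0%N) =
  (\prod_(1 <= k < n.+1) num k) *: v n.
Proof.
elim: n => [|n IH] shift; first by rewrite !big_geq // !scale1r mul1mx.
have IHn : (\prod_(1 <= k < n.+1) den k) *: (Tmat x p lam n *m v 0%N) =
           (\prod_(1 <= k < n.+1) num k) *: v n.
  by apply: IH => k /andP[k1 kn]; rewrite shift // k1 (leq_trans kn).
rewrite !(big_nat_recr n.+1) //= [_ * den _]mulrC [_ * num _]mulrC -!scalerA.
rewrite -mulmxA scalemxAr IHn -scalemxAr [LHS]scalerA mulrC -scalerA.
by rewrite shift ?leqnn // !scalerA mulrC.
Qed.

Lemma eigenvalue_col n (T : 'M[F]_n) (v : 'cV[F]_n) mu :
  v != 0 -> T *m v = mu *: v -> eigenvalue T mu.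
Proof.
move=> v0 Tv.
have ker_v : (T - mu%:M) *m v = 0 by rewrite mulmxBl Tv mul_scalar_mx subrr.
have : \det (T - mu%:M)^T == 0.
  by apply/det0P; exists v^T; rewrite ?trmx_eq0 // -trmx_mul ker_v trmx0.
rewrite det_tr => /det0P [w w0 wT].
apply/eigenvalueP; exists w => //.
by apply/eqP; rewrite -subr_eq0 -mul_mx_scalar -mulmxBr wT.
Qed.

Lemma prod_nat_neq0 (f : nat -> F) m n :
  (forall k, (m <= k < n)%N -> f k != 0) -> \prod_(m <= k < n) f k != 0.
Proof.
move=> f0; rewrite prodf_seq_neq0; apply/allP => k.
by rewrite mem_index_iota => /f0.
Qed.

Lemma Tmat_periodic_eigenvalue N lam x p xt :
  (2 <= N)%N -> lam != 0 ->
  let xtprev := fun k : nat => if k == 1%N then xt N else xt k.-1 in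
  let xnext := fun k : nat => if k == N then x 1%N else x k.+1 in
  (forall k, (1 <= k <= N)%N -> xt k != x k) ->
  (forall k, (1 <= k <= N)%N -> x k != xtprev k) ->
  (forall k, (1 <= k <= N)%N ->
     p k = lam / (xt k - x k) + lam / (x k - xtprev k)) ->
  eigenvalue (Tmat x p lam N)
    ((\prod_(1 <= k < N.+1) (xt k - xnext k)) /
     (\prod_(1 <= k < N.+1) (xt k - x k))).
Proof.
move=> N2 lam0 xtprev xnext xtx xxt pk.
have N0 : (0 < N)%N by apply: leq_trans N2.
pose xt0 k := if k == 0%N then xt N else xt k.
have xt0E k : (0 < k)%N -> xt0 k = xt k by rewrite /xt0 eqn0Ngt => ->.
have xtprevE k : (0 < k)%N -> xtprev k = xt0 k.-1 by case: k => [|[|k]].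
have den0 : \prod_(1 <= k < N.+1) (xt k - x k) != 0.
  by apply: prod_nat_neq0 => k /xtx; rewrite subr_eq0.
have telescope : (\prod_(1 <= k < N.+1) (xt k - x k)) *:
    (Tmat x p lam N *m col2 (xt N) 1) =
    (\prod_(1 <= k < N.+1) (xt0 k.-1 - x k)) *: col2 (xt N) 1.
  rewrite -[in RHS](xt0E N N0).
  apply: (@Tmat_telescope _ _ _ (fun k => col2 (xt0 k) 1)) => k /andP[k1 kN].
  by rewrite (xt0E k k1) -(xtprevE k k1) Lmat_shift ?xtx ?xxt ?pk ?k1.
apply: (@eigenvalue_col _ _ (col2 (xt N) 1)); first exact: col2_neq0.
apply: (scalerI den0); rewrite telescope scalerA mulrC divfK //.
congr (_ *: _).
rewrite big_nat_recl // big_nat_recr //= mulrC /xnext eqxx; congr (_ * _).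
by apply: eq_big_nat => k /andP[k1 kN]; rewrite /xt0 eqn0Ngt k1 ltn_eqF.
Qed.

Lemma Tmat_open_entry21 N lam x p xt :
  (1 <= N)%N -> lam != 0 ->
  (forall k, (1 <= k <= N)%N -> xt k != x k) ->
  (forall k, (2 <= k <= N)%N -> x k != xt k.-1) ->
  p 1%N = lam / (xt 1%N - x 1%N) ->
  (forall k, (2 <= k <= N)%N ->
     p k = lam / (xt k - x k) + lam / (x k - xt k.-1)) ->
  Tmat x p lam N idx2 idx1 =
    (\prod_(1 <= k < N) (xt k - x k.+1)) /
    (\prod_(1 <= k < N.+1) (xt k - x k)).
Proof.
move=> N1 lam0 xtx xxt p1 pk.
pose v k := if k == 0%N then col2 1 0 else col2 (xt k) 1.
pose num k := if k == 1%N then 1 else xt k.-1 - x k.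
have den0 : \prod_(1 <= k < N.+1) (xt k - x k) != 0.
  by apply: prod_nat_neq0 => k /xtx; rewrite subr_eq0.
have telescope : (\prod_(1 <= k < N.+1) (xt k - x k)) *:
    (Tmat x p lam N *m v 0%N) = (\prod_(1 <= k < N.+1) num k) *: v N.
  apply: Tmat_telescope => -[|[|k]] // /andP[_ kN]; rewrite /v /num /=.
  - by rewrite scale1r Lmat_shift_inf ?xtx.
  - by rewrite Lmat_shift ?xtx ?xxt ?pk ?kN.
have := congr1 (fun M : 'cV_2 => M idx2 0) telescope.
rewrite /v (eqn0Ngt N) N1 /= !mxE big_ord_recl big_ord1 !mxE /= mulr0 addr0 mulr1 => entry.
apply: (mulfI den0); rewrite (_ : idx1 = ord0); last exact: val_inj.
rewrite entry [RHS]mulrC divfK // big_nat_recl //= mul1r mulr1.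
by apply: eq_big_nat => k /andP[k1 _]; rewrite /num eqSS eqn0Ngt k1.
Qed.

End LaxMatrixTransfer.

Local Open Scope complex_scope.

Theorem theorem12 (R : realType) (N : nat) (lam : R[i]) :
  (2 <= N)%N -> lam != 0 ->
  (* (a) periodic case: xt_0 = xt_N, x_{N+1} = x_1 *)
  (forall x p xt : nat -> R[i],
     let xtprev := fun k : nat => if k == 1%N then xt N else xt k.-1 in
     let xnext := fun k : nat => if k == N then x 1%N else x k.+1 in
     (forall k, (1 <= k <= N)%N -> xt k != x k) ->
     (forall k, (1 <= k <= N)%N -> x k != xtprev k) ->
     (forall k, (1 <= k <= N)%N ->
        p k = lam / (xt k - x k) + lam / (x k - xtprev k)) ->
     eigenvalue (Tmat x p lam N)
       ((\prod_(1 <= k < N.+1) (xt k - xnext k)) /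
        (\prod_(1 <= k < N.+1) (xt k - x k)))) /\
  (* (b) open-end case *)
  (forall x p xt : nat -> R[i],
     (forall k, (1 <= k <= N)%N -> xt k != x k) ->
     (forall k, (2 <= k <= N)%N -> x k != xt k.-1) ->
     p 1%N = lam / (xt 1%N - x 1%N) ->
     (forall k, (2 <= k <= N)%N ->
        p k = lam / (xt k - x k) + lam / (x k - xt k.-1)) ->
     Tmat x p lam N idx2 idx1 =
       (\prod_(1 <= k < N) (xt k - x k.+1)) /
       (\prod_(1 <= k < N.+1) (xt k - x k))).
Proof.
move=> N2 lam0; split=> x p xt; first exact: Tmat_periodic_eigenvalue.
by apply: Tmat_open_entry21 => //; apply: leq_trans N2.
Qed.
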